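(* Let $k\in\{1,2,\dots\}\cup\{\infty\}$. The group $D^k_{\mathrm{nb}}(\mathbb{R},0)$ is a normal subgroup of $H^k(\mathbb{R},0)$.
   Context: $H^k(\mathbb{R},0)$ is the group of homeomorphisms $h$ of $\mathbb{R}$ with $h(0)=0$ whose restriction to $\mathbb{R}\setminus\{0\}$ is a $C^k$-diffeomorphism of $\mathbb{R}\setminus\{0\}$. $D^k_{\mathrm{nb}}(\mathbb{R},0)$ is the group of $C^k$-diffeomorphisms of $\mathbb{R}$ that are the identity on some neighborhood of $0$. *)

From Stdlib Require Import Reals.
From Coquelicot Require Import Coquelicot.
Open Scope R_scope.

Inductive regularity := Fin (n : nat) | Infty.

Definition reg_ge1 (k : regularity) : Prop :=
  match k with Fin n => (1 <= n)%nat | Infty => True end.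

(* f is C^n on the open set U: the iterated derivatives up to order n exist
   on U and the n-th derivative is continuous on U.  (Derive is local, so on
   an open set Derive_n f j agrees with the genuine j-th derivative.) *)
Definition Cn_on (n : nat) (U : R -> Prop) (f : R -> R) : Prop :=
  (forall x, U x -> forall j, (j < n)%nat -> ex_derive (Derive_n f j) x) /\
  (forall x, U x -> continuous (Derive_n f n) x).

Definition Ck_on (k : regularity) (U : R -> Prop) (f : R -> R) : Prop :=
  match k with
  | Fin n => Cn_on n U f
  | Infty => forall n, Cn_on n U f
  end.

Definition allR (x : R) : Prop := True.
Definition nonzero (x : R) : Prop := x <> 0.

Definition is_inverse (f g : R -> R) : Prop :=
  (forall x, g (f x) = x) /\ (forall y, f (g y) = y).

(* (h, hi) ∈ H^k(R,0): h homeomorphism of R with inverse hi, h 0 = 0, and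
   the restriction of h to R\{0} is a C^k diffeomorphism of R\{0}
   (i.e. h and hi are C^k on R\{0}). *)
Definition Hk (k : regularity) (h hi : R -> R) : Prop :=
  is_inverse h hi /\
  (forall x, continuous h x) /\ (forall x, continuous hi x) /\
  h 0 = 0 /\
  Ck_on k nonzero h /\ Ck_on k nonzero hi.

Definition Dnb (k : regularity) (f fi : R -> R) : Prop :=
  is_inverse f fi /\
  Ck_on k allR f /\ Ck_on k allR fi /\
  exists e, 0 < e /\ forall x, Rabs x < e -> f x = x.

Definition fcomp (f g : R -> R) : R -> R := fun x => f (g x).
Definition idR : R -> R := fun x => x.

From Pilot Require Import Defs.
From Stdlib Require Import Reals FunctionalExtensionality Lia Lra.
From Coquelicot Require Import Coquelicot.
Open Scope R_scope.

(* Smoothness is local: C^k on an open set means C^k on a neighbourhood of each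
   of its points, so it is enough to check the conjugate h f h^-1 near every x.
   Near 0 it is the identity, because h^-1 is continuous at 0 = h^-1 0 and f is
   the identity near 0.  Near x <> 0 it is a composition of C^k maps, since h and
   h^-1 are C^k on R \ {0} and preserve R \ {0}. *)

Definition Cn_near (n : nat) (f : R -> R) (x : R) : Prop :=
  locally x (fun y => (forall j, (j < n)%nat -> ex_derive (Derive_n f j) y) /\
                      continuous (Derive_n f n) y).

Lemma Derive_n_S (f : R -> R) (n : nat) :
  Derive_n f (S n) = Derive_n (Derive f) n.
Proof.
  apply functional_extensionality; intro x.
  rewrite <- Nat.add_1_r, <- Derive_n_comp. reflexivity.
Qed.

Lemma Cn_near_ext_loc n f g x :
  locally x (fun t => f t = g t) -> Cn_near n f x -> Cn_near n g x.
Proof.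
  unfold Cn_near; intros Efg Hf.
  generalize (filter_and _ _ (locally_locally _ _ Efg) Hf).
  apply filter_imp; intros y [Ey [Hder Hcont]].
  assert (EDn : forall j, locally y (fun t => Derive_n f j t = Derive_n g j t)).
  { intro j. exact (filter_imp _ _ (fun t Et => Derive_n_ext_loc f g j t Et)
                      (locally_locally _ _ Ey)). }
  split.
  - intros j Hj. apply (ex_derive_ext_loc _ _ _ (EDn j)), Hder, Hj.
  - exact (continuous_ext_loc _ _ y (EDn n) Hcont).
Qed.

Lemma Cn_near_S n f x :
  Cn_near (S n) f x <-> locally x (ex_derive f) /\ Cn_near n (Derive f) x.
Proof.
  unfold Cn_near; split.
  - intros Hf; split.
    + exact (filter_imp _ _ (fun y Hy => proj1 Hy 0%nat (Nat.lt_0_succ _)) Hf).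
    + revert Hf; apply filter_imp; intros y [Hder Hcont].
      split; [intros j Hj; rewrite <- Derive_n_S; apply Hder; lia|].
      rewrite <- Derive_n_S. exact Hcont.
  - intros [Hf HDf]. generalize (filter_and _ _ Hf HDf); apply filter_imp.
    intros y [Hy [Hder Hcont]].
    split; [|rewrite Derive_n_S; exact Hcont].
    intros [|j] Hj; [exact Hy|]. rewrite Derive_n_S. apply Hder; lia.
Qed.

Lemma Cn_near_pred n f x : Cn_near (S n) f x -> Cn_near n f x.
Proof.
  unfold Cn_near; apply filter_imp; intros y [Hder _]. split.
  - intros j Hj. apply Hder; lia.
  - apply (ex_derive_continuous (Derive_n f n)), Hder; lia.
Qed.

Lemma Cn_near_continuous n f x : Cn_near n f x -> continuous f x.
Proof.
  induction n as [|n IH]; intro Hf.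
  - exact (proj2 (locally_singleton _ _ Hf)).
  - exact (IH (Cn_near_pred _ _ _ Hf)).
Qed.

Lemma Cn_near_const n c x : Cn_near n (fun _ => c) x.
Proof.
  revert c x; induction n as [|n IH]; intros c x.
  - unfold Cn_near; apply filter_forall; intros y. split; [intros; lia | apply continuous_const].
  - apply Cn_near_S; split.
    + apply filter_forall; intros y. apply ex_derive_const.
    + apply (Cn_near_ext_loc _ (fun _ => 0)); [|apply IH].
      apply filter_forall; intros y. symmetry. apply Derive_const.
Qed.

Lemma Cn_near_id n x : Cn_near n (fun t => t) x.
Proof.
  destruct n as [|n].
  - unfold Cn_near; apply filter_forall; intros y. split; [intros; lia | apply continuous_id].
  - apply Cn_near_S; split.
    + apply filter_forall; intros y. apply ex_derive_id.
    + apply (Cn_near_ext_loc _ (fun _ => 1)); [|apply Cn_near_const].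
      apply filter_forall; intros y. symmetry. apply Derive_id.
Qed.

Lemma Cn_near_plus n f g x :
  Cn_near n f x -> Cn_near n g x -> Cn_near n (fun t => f t + g t) x.
Proof.
  revert f g x; induction n as [|n IH]; intros f g x Hf Hg.
  - unfold Cn_near in *; generalize (filter_and _ _ Hf Hg); apply filter_imp.
    intros y [[_ Cf] [_ Cg]]. split; [intros; lia | exact (continuous_plus f g y Cf Cg)].
  - apply Cn_near_S in Hf as [Df Hf], Hg as [Dg Hg].
    assert (Dfg := filter_and _ _ Df Dg).
    apply Cn_near_S; split.
    + revert Dfg; apply filter_imp; intros y [Dfy Dgy]. exact (ex_derive_plus f g y Dfy Dgy).
    + apply (Cn_near_ext_loc _ (fun t => Derive f t + Derive g t)); [|now apply IH].
      revert Dfg; apply filter_imp; intros y [Dfy Dgy].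
      symmetry. exact (Derive_plus f g y Dfy Dgy).
Qed.

Lemma Cn_near_mult n f g x :
  Cn_near n f x -> Cn_near n g x -> Cn_near n (fun t => f t * g t) x.
Proof.
  revert f g x; induction n as [|n IH]; intros f g x Hf Hg.
  - unfold Cn_near in *; generalize (filter_and _ _ Hf Hg); apply filter_imp.
    intros y [[_ Cf] [_ Cg]]. split; [intros; lia | exact (continuous_mult f g y Cf Cg)].
  - assert (Hf' := Cn_near_pred _ _ _ Hf). assert (Hg' := Cn_near_pred _ _ _ Hg).
    apply Cn_near_S in Hf as [Df Hf], Hg as [Dg Hg].
    assert (Dfg := filter_and _ _ Df Dg).
    apply Cn_near_S; split.
    + revert Dfg; apply filter_imp; intros y [Dfy Dgy]. exact (ex_derive_mult f g y Dfy Dgy).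
    + apply (Cn_near_ext_loc _ (fun t => Derive f t * g t + f t * Derive g t)).
      * revert Dfg; apply filter_imp; intros y [Dfy Dgy].
        symmetry. exact (Derive_mult f g y Dfy Dgy).
      * apply Cn_near_plus; now apply IH.
Qed.

Lemma Cn_near_comp n f g x :
  Cn_near n g x -> Cn_near n f (g x) -> Cn_near n (fun t => f (g t)) x.
Proof.
  revert f g x; induction n as [|n IH]; intros f g x Hg Hf;
    assert (Cg := Cn_near_continuous _ _ _ Hg).
  - unfold Cn_near in *; generalize (filter_and _ _ Hg (Cg _ Hf)); apply filter_imp.
    intros y [[_ Cgy] [_ Cfgy]]. split; [intros; lia | exact (continuous_comp g f y Cgy Cfgy)].
  - assert (Hg' := Cn_near_pred _ _ _ Hg).
    apply Cn_near_S in Hf as [Df Hf], Hg as [Dg Hg].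
    assert (Dfg := filter_and _ _ Dg (Cg _ Df)).
    apply Cn_near_S; split.
    + revert Dfg; apply filter_imp; intros y [Dgy Dfgy]. exact (ex_derive_comp f g y Dfgy Dgy).
    + apply (Cn_near_ext_loc _ (fun t => Derive g t * Derive f (g t))).
      * revert Dfg; apply filter_imp; intros y [Dgy Dfgy].
        symmetry. exact (Derive_comp f g y Dfgy Dgy).
      * apply Cn_near_mult; [exact Hg | now apply IH].
Qed.

Definition Ck_near (k : regularity) (f : R -> R) (x : R) : Prop :=
  match k with Fin n => Cn_near n f x | Infty => forall n, Cn_near n f x end.

Lemma Cn_on_open_iff n (U : R -> Prop) f :
  open U -> (Cn_on n U f <-> forall x, U x -> Cn_near n f x).
Proof.
  intros oU; unfold Cn_on, Cn_near; split.
  - intros [Hder Hcont] x Ux. apply (filter_imp U); [|exact (oU x Ux)].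
    intros y Uy. split; [intros; now apply Hder | now apply Hcont].
  - intros Hf; split; intros x Ux; [intros j Hj|];
      apply (locally_singleton _ _ (Hf x Ux)); exact Hj.
Qed.

Lemma Ck_on_open_iff k (U : R -> Prop) f :
  open U -> (Ck_on k U f <-> forall x, U x -> Ck_near k f x).
Proof.
  intros oU; destruct k as [n|]; simpl.
  - now apply Cn_on_open_iff.
  - split.
    + intros Hf x Ux n. now apply (Cn_on_open_iff n U f oU).
    + intros Hf n. apply (Cn_on_open_iff n U f oU). intros x Ux. now apply Hf.
Qed.

Lemma Ck_on_near k (U : R -> Prop) f x :
  open U -> Ck_on k U f -> U x -> Ck_near k f x.
Proof. intros oU Hf. exact (proj1 (Ck_on_open_iff k U f oU) Hf x). Qed.

Lemma Ck_near_ext_loc k f g x :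
  locally x (fun t => f t = g t) -> Ck_near k f x -> Ck_near k g x.
Proof. destruct k; simpl; intros; eapply Cn_near_ext_loc; eauto. Qed.

Lemma Ck_near_id k x : Ck_near k (fun t => t) x.
Proof. destruct k; simpl; intros; apply Cn_near_id. Qed.

Lemma Ck_near_comp k f g x :
  Ck_near k g x -> Ck_near k f (g x) -> Ck_near k (fun t => f (g t)) x.
Proof. destruct k; simpl; intros; apply Cn_near_comp; auto. Qed.

Lemma Ck_near_continuous k f x : Ck_near k f x -> continuous f x.
Proof. destruct k; simpl; intro Hf; [|specialize (Hf 0%nat)]; exact (Cn_near_continuous _ _ _ Hf). Qed.

Lemma Ck_on_id k (U : R -> Prop) : open U -> Ck_on k U idR.
Proof. intros oU. apply Ck_on_open_iff; [exact oU|]. intros; apply Ck_near_id. Qed.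

Lemma Ck_on_comp k (U V : R -> Prop) f g :
  open U -> open V -> (forall x, U x -> V (g x)) ->
  Ck_on k V f -> Ck_on k U g -> Ck_on k U (fcomp f g).
Proof.
  intros oU oV gUV Hf Hg. apply Ck_on_open_iff; [exact oU|]; intros x Ux.
  apply (Ck_near_comp k f g).
  - exact (Ck_on_near k U g x oU Hg Ux).
  - exact (Ck_on_near k V f _ oV Hf (gUV x Ux)).
Qed.

Lemma Ck_on_continuous k (U : R -> Prop) f x :
  open U -> Ck_on k U f -> U x -> continuous f x.
Proof.
  intros oU Hf Ux. exact (Ck_near_continuous k f x (Ck_on_near k U f x oU Hf Ux)).
Qed.

Lemma Ck_on_subset k (U V : R -> Prop) f :
  (forall x, V x -> U x) -> Ck_on k U f -> Ck_on k V f.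
Proof.
  intros VU. assert (Cn : forall n, Cn_on n U f -> Cn_on n V f).
  { intros n [Hder Hcont]. split; intros x Vx; [apply Hder | apply Hcont]; auto. }
  destruct k; simpl; auto.
Qed.

Lemma open_allR : open allR.
Proof. exact open_true. Qed.

Lemma open_nonzero : open Defs.nonzero.
Proof. exact (open_neq 0). Qed.

Lemma is_inverse_id : is_inverse idR idR.
Proof. split; reflexivity. Qed.

Lemma is_inverse_sym f fi : is_inverse f fi -> is_inverse fi f.
Proof. intros [A B]; split; assumption. Qed.

Lemma is_inverse_comp f fi g gi :
  is_inverse f fi -> is_inverse g gi -> is_inverse (fcomp f g) (fcomp gi fi).
Proof.
  intros [fK fiK] [gK giK]; unfold fcomp; split; intro x.
  - now rewrite fK, gK.
  - now rewrite giK, fiK.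
Qed.

Lemma is_inverse_fix0 f fi : is_inverse f fi -> f 0 = 0 -> fi 0 = 0.
Proof. intros [fK _] f0. rewrite <- f0 at 1. apply fK. Qed.

Lemma is_inverse_nonzero f fi x :
  is_inverse f fi -> f 0 = 0 -> x <> 0 -> f x <> 0.
Proof. intros [fK _] f0 Hx fx0. apply Hx. rewrite <- (fK x), fx0, <- f0 at 1. apply fK. Qed.

Lemma locally_0_Rabs (P : R -> Prop) :
  (exists e, 0 < e /\ forall x, Rabs x < e -> P x) <-> locally 0 P.
Proof.
  split.
  - intros (e & e_pos & He). exists (mkposreal e e_pos); intros x Hx.
    apply He. change (Rabs (x - 0) < e) in Hx. now rewrite Rminus_0_r in Hx.
  - intros [e He]. exists e; split; [apply cond_pos|]; intros x Hx.
    apply He. change (Rabs (x - 0) < e). now rewrite Rminus_0_r.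
Qed.

Lemma fixed_near_inverse f fi x :
  is_inverse f fi -> locally x (fun t => f t = t) -> locally x (fun t => fi t = t).
Proof.
  intros [fK _]; apply filter_imp; intros t ft. rewrite <- ft at 1. apply fK.
Qed.

Lemma fixed_near_conj h hi f :
  is_inverse h hi -> continuous hi 0 -> hi 0 = 0 ->
  locally 0 (fun t => f t = t) -> locally 0 (fun t => fcomp h (fcomp f hi) t = t).
Proof.
  intros [_ hiK] Chi hi0 Hf. rewrite <- hi0 in Hf.
  apply (filter_imp (fun t => f (hi t) = hi t)); [|exact (Chi _ Hf)].
  intros t ft. unfold fcomp. now rewrite ft, hiK.
Qed.

Lemma Hk_id k : Hk k idR idR.
Proof.
  split; [exact is_inverse_id|].
  split; [intro; apply continuous_id|]. split; [intro; apply continuous_id|].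
  split; [reflexivity|]. split; apply Ck_on_id, open_nonzero.
Qed.

Lemma Hk_inv k h hi : Hk k h hi -> Hk k hi h.
Proof.
  intros (Ih & Ch & Chi & h0 & Sh & Shi).
  split; [now apply is_inverse_sym|]. split; [exact Chi|]. split; [exact Ch|].
  split; [exact (is_inverse_fix0 _ _ Ih h0)|]. split; [exact Shi | exact Sh].
Qed.

Lemma Hk_comp k h hi g gi :
  Hk k h hi -> Hk k g gi -> Hk k (fcomp h g) (fcomp gi hi).
Proof.
  intros (Ih & Ch & Chi & h0 & Sh & Shi) (Ig & Cg & Cgi & g0 & Sg & Sgi).
  assert (hi0 := is_inverse_fix0 _ _ Ih h0).
  split; [now apply is_inverse_comp|].
  split; [intro x; now apply (continuous_comp g h)|].
  split; [intro x; now apply (continuous_comp hi gi)|].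
  split; [unfold fcomp; now rewrite g0, h0|].
  split; apply (Ck_on_comp _ _ Defs.nonzero); auto using open_nonzero; intros x.
  - now apply (is_inverse_nonzero g gi).
  - apply (is_inverse_nonzero hi h); auto using is_inverse_sym.
Qed.

Lemma Dnb_Hk k f fi : Dnb k f fi -> Hk k f fi.
Proof.
  intros (If & Sf & Sfi & f_id).
  apply locally_0_Rabs, locally_singleton in f_id.
  assert (nonzero_allR : forall x, Defs.nonzero x -> allR x) by (intros; exact I).
  split; [exact If|].
  split; [intro x; exact (Ck_on_continuous k allR f x open_allR Sf I)|].
  split; [intro x; exact (Ck_on_continuous k allR fi x open_allR Sfi I)|].
  split; [exact f_id|].
  split; [exact (Ck_on_subset k allR _ f nonzero_allR Sf)|].
  exact (Ck_on_subset k allR _ fi nonzero_allR Sfi).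
Qed.

Lemma Dnb_id k : Dnb k idR idR.
Proof.
  split; [exact is_inverse_id|].
  split; [now apply Ck_on_id, open_allR|].
  split; [now apply Ck_on_id, open_allR|].
  exists 1; split; [lra | reflexivity].
Qed.

Lemma Dnb_inv k f fi : Dnb k f fi -> Dnb k fi f.
Proof.
  intros (If & Sf & Sfi & f_id).
  split; [now apply is_inverse_sym|]. split; [exact Sfi|]. split; [exact Sf|].
  apply locally_0_Rabs. apply locally_0_Rabs in f_id.
  exact (fixed_near_inverse _ _ _ If f_id).
Qed.

Lemma Dnb_comp k f fi g gi :
  Dnb k f fi -> Dnb k g gi -> Dnb k (fcomp f g) (fcomp gi fi).
Proof.
  intros (If & Sf & Sfi & f_id) (Ig & Sg & Sgi & g_id).
  apply locally_0_Rabs in f_id, g_id.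
  split; [now apply is_inverse_comp|].
  split; [apply (Ck_on_comp _ _ allR); auto using open_allR|].
  split; [apply (Ck_on_comp _ _ allR); auto using open_allR|].
  apply locally_0_Rabs. generalize (filter_and _ _ f_id g_id); apply filter_imp.
  intros x [fx gx]. unfold fcomp. now rewrite gx, fx.
Qed.

Lemma Ck_on_conj k h hi f fi :
  Hk k h hi -> Dnb k f fi -> Ck_on k allR (fcomp h (fcomp f hi)).
Proof.
  intros (Ih & _ & Chi & h0 & Sh & Shi) (If & Sf & _ & f_id).
  apply locally_0_Rabs in f_id.
  assert (hi0 := is_inverse_fix0 _ _ Ih h0).
  assert (f0 : f 0 = 0) by exact (locally_singleton _ _ f_id).
  apply Ck_on_open_iff; [exact open_allR|]; intros x _.
  destruct (Req_dec x 0) as [->|x0].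
  - apply (Ck_near_ext_loc _ (fun t => t)); [|apply Ck_near_id].
    apply (filter_imp (fun t => fcomp h (fcomp f hi) t = t)); [intros; now symmetry|].
    now apply fixed_near_conj.
  - assert (hix0 : hi x <> 0) by (apply (is_inverse_nonzero hi h); auto using is_inverse_sym).
    apply (Ck_near_comp k h (fcomp f hi)).
    + apply (Ck_near_comp k f hi).
      * exact (Ck_on_near k _ hi x open_nonzero Shi x0).
      * exact (Ck_on_near k _ f _ open_allR Sf I).
    + exact (Ck_on_near k _ h _ open_nonzero Sh (is_inverse_nonzero f fi _ If f0 hix0)).
Qed.

Lemma Dnb_conj k h hi f fi :
  Hk k h hi -> Dnb k f fi -> Dnb k (fcomp h (fcomp f hi)) (fcomp h (fcomp fi hi)).
Proof.
  intros Hh Hf.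
  pose proof Hh as (Ih & _ & Chi & h0 & _). pose proof Hf as (If & _ & _ & f_id).
  split; [apply (is_inverse_comp _ _ _ (fcomp h fi)), is_inverse_comp; auto using is_inverse_sym|].
  split; [exact (Ck_on_conj _ _ _ _ _ Hh Hf)|].
  split; [exact (Ck_on_conj _ _ _ _ _ Hh (Dnb_inv _ _ _ Hf))|].
  apply locally_0_Rabs in f_id. apply locally_0_Rabs.
  exact (fixed_near_conj _ _ _ Ih (Chi 0) (is_inverse_fix0 _ _ Ih h0) f_id).
Qed.

Theorem lemma5p7 (k : regularity) (hk : reg_ge1 k) :
  (* H^k(R,0) is a group under composition *)
  (Hk k idR idR /\
   (forall h hi g gi, Hk k h hi -> Hk k g gi -> Hk k (fcomp h g) (fcomp gi hi)) /\
   (forall h hi, Hk k h hi -> Hk k hi h)) /\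
  (* D^k_nb(R,0) is a subgroup of H^k(R,0) *)
  (forall f fi, Dnb k f fi -> Hk k f fi) /\
  Dnb k idR idR /\
  (forall f fi g gi, Dnb k f fi -> Dnb k g gi -> Dnb k (fcomp f g) (fcomp gi fi)) /\
  (forall f fi, Dnb k f fi -> Dnb k fi f) /\
  (* normality: stable under conjugation by elements of H^k(R,0) *)
  (forall h hi f fi, Hk k h hi -> Dnb k f fi ->
     Dnb k (fcomp h (fcomp f hi)) (fcomp h (fcomp fi hi))).
Proof.
  split; [split; [|split]|]; [apply Hk_id | apply Hk_comp | apply Hk_inv |].
  split; [apply Dnb_Hk|]. split; [apply Dnb_id|].
  split; [apply Dnb_comp|]. split; [apply Dnb_inv | apply Dnb_conj].
Qed.
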